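(* Let $G$ be a simple, undirected, connected graph on $N>2$ vertices with edge set $E$ and degree sequence $d_1\le d_2\le\cdots\le d_N$. Then $$R^+(G)\ge N(N-2)+2|E|\sum_{j=1}^N\frac{1}{d_j}-\frac{4|E|}{1+d_1}.$$
   Context: For vertices $i,j$ of $G$, $R_{ij}$ denotes the effective resistance between $i$ and $j$ when every edge of $G$ is a unit resistor. The additive degree-Kirchhoff index is $R^+(G)=\sum_{i<j}(d_i+d_j)R_{ij}$, where $d_i$ is the degree of vertex $i$. *)

From HB Require Import structures.
From mathcomp Require Import all_boot all_order all_algebra.
Set Implicit Arguments. Unset Strict Implicit. Unset Printing Implicit Defensive.
Import Order.TTheory GRing.Theory Num.Theory.
Local Open Scope ring_scope.

Definition simple_graph (N : nat) (e : rel 'I_N) : Prop :=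
  symmetric e /\ irreflexive e.

Definition connected_graph (N : nat) (e : rel 'I_N) : Prop :=
  forall i j : 'I_N, connect e i j.

Definition deg (N : nat) (e : rel 'I_N) (i : 'I_N) : nat := #|[set j | e i j]|.

(* minimum degree d_1 (N is used as the neutral element; for N > 0 the
   minimum over all vertices is attained) *)
Definition mindeg (N : nat) (e : rel 'I_N) : nat :=
  \big[minn/N]_(i : 'I_N) deg e i.

Definition nedges (N : nat) (e : rel 'I_N) : nat :=
  #|[set p : 'I_N * 'I_N | (p.1 < p.2)%N && e p.1 p.2]|.

Definition laplacian (R : pzRingType) (N : nat) (e : rel 'I_N) : 'M[R]_N :=
  \matrix_(i, j) (if i == j then (deg e i)%:R else if e i j then -1 else 0).

(* Effective resistance with unit resistors (Kirchhoff): inject a unit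
   current at i and extract it at j; the node potentials x solve
   x L = e_i - e_j (L symmetric), and R_ij = x_i - x_j.  pinvmx picks a
   solution whenever one exists (always the case for connected graphs). *)
Definition eff_res (R : fieldType) (N : nat) (e : rel 'I_N) (i j : 'I_N) : R :=
  let b : 'rV[R]_N := delta_mx 0 i - delta_mx 0 j in
  let x := b *m pinvmx (laplacian R e) in
  x 0 i - x 0 j.

Definition add_deg_kirchhoff (R : fieldType) (N : nat) (e : rel 'I_N) : R :=
  \sum_(i : 'I_N) \sum_(j : 'I_N | (i < j)%N)
     ((deg e i + deg e j)%:R * eff_res R e i j).

(* If the graph is connected, the potential x of the unit current from i to j
   solves x L = e_i - e_j, and R_ij = 2 (z_i - z_j) - z L z^T is maximal at
   z = x (Thomson's principle).  Test potentials supported on {i, j} give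
   R_ij >= 1/d_i + 1/d_j for non-adjacent pairs and
   R_ij >= (d_i + d_j - 2)/(d_i d_j - 1) for adjacent ones, so that
   (d_i + d_j) R_ij falls short of (d_i + d_j)(1/d_i + 1/d_j) by at most
   4/(1 + d_1) on edges and not at all elsewhere.  Summing over all pairs,
   (d_i + d_j)(1/d_i + 1/d_j) adds up to N(N - 2) + 2|E| sum_j 1/d_j by the
   handshake lemma. *)

From HB Require Import structures.
From mathcomp Require Import all_boot all_order all_algebra.
From mathcomp Require Import ring lra zify.
Set Implicit Arguments.
Unset Strict Implicit.
Unset Printing Implicit Defensive.
Import Order.TTheory GRing.Theory Num.Theory.
Local Open Scope ring_scope.

Lemma sum_sym_split (V : nmodType) (N : nat) (F : 'I_N -> 'I_N -> V) :
  (forall i j, F i j = F j i) ->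
  \sum_i \sum_j F i j
  = (\sum_(i : 'I_N) \sum_(j : 'I_N | (i < j)%N) F i j) *+ 2 + \sum_i F i i.
Proof.
move=> F_sym.
have split_row i : \sum_j F i j
    = \sum_(j : 'I_N | (i < j)%N) F i j + (F i i + \sum_(j : 'I_N | (j < i)%N) F i j).
  rewrite (bigID (fun j : 'I_N => (i < j)%N)) /=; congr (_ + _).
  rewrite (bigD1 i) ?ltnn //=; congr (_ + _); apply: eq_bigl => j.
  by rewrite -val_eqE /= -leqNgt; lia.
have lower_upper : \sum_(i : 'I_N) \sum_(j : 'I_N | (j < i)%N) F i j
                 = \sum_(i : 'I_N) \sum_(j : 'I_N | (i < j)%N) F i j.
  rewrite (exchange_big_dep predT) //=; apply: eq_bigr => i _.
  by apply: eq_bigr => j _; rewrite F_sym.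
under eq_bigr => i _ do rewrite split_row.
by rewrite !big_split /= lower_upper mulr2n [RHS]addrC [LHS]addrCA.
Qed.

Lemma sum_pairs_mul_inv (R : numFieldType) (N : nat) (x : 'I_N -> R) :
  (forall i, x i != 0) ->
  \sum_(i : 'I_N) \sum_(j : 'I_N | (i < j)%N) (x i + x j) * ((x i)^-1 + (x j)^-1)
  = N%:R * (N%:R - 2) + (\sum_i x i) * \sum_i (x i)^-1.
Proof.
move=> x_neq0; set F := fun i j => (x i + x j) * ((x i)^-1 + (x j)^-1).
have F_sym i j : F i j = F j i by rewrite /F addrC [_^-1 + _]addrC.
have := sum_sym_split F_sym.
have -> : \sum_i \sum_j F i j
    = 2 * (N%:R * N%:R) + 2 * ((\sum_i x i) * \sum_i (x i)^-1).
  transitivity (\sum_i \sum_j (2 + x i * (x j)^-1 + x j * (x i)^-1)).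
    by do 2![apply: eq_bigr => ? _]; rewrite /F; field; rewrite !x_neq0.
  under eq_bigr => i _ do rewrite !big_split /=.
  rewrite !big_split /= !sumr_const !card_ord [X in _ + X = _]exchange_big.
  by rewrite -big_distrlr /= -[N%:R *+ N]mulr_natr; ring.
have -> : \sum_i F i i = 4 * N%:R.
  transitivity (\sum_(i : 'I_N) (4 : R)).
    by apply: eq_bigr => i _; rewrite /F; field; rewrite x_neq0.
  by rewrite sumr_const card_ord mulr_natr.
move=> sym; apply: (@mulfI _ 2%:R); first by rewrite pnatr_eq0.
by rewrite mulr_natl; apply: (addIr (4 * N%:R)); rewrite -sym; ring.
Qed.

Lemma adjacent_pair_poly_ineq (R : realFieldType) (A B : R) :
  1 <= A <= B ->
  (A + B) * (2 * A * B - A - B) * (1 + A) <= 4 * A * B * (A * B - 1).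
Proof.
move=> /andP [A1 AB]; set k := B - A.
have -> : B = A + k by rewrite /k; ring.
have k0 : 0 <= k by rewrite subr_ge0.
rewrite -subr_ge0.
have -> : 4 * A * (A + k) * (A * (A + k) - 1)
   - (A + (A + k)) * (2 * A * (A + k) - A - (A + k)) * (1 + A)
   = 2 * A ^+ 2 * (A - 1) * k + (2 * A ^+ 2 - A + 1) * k ^+ 2 by ring.
have AA : A <= A ^+ 2 by rewrite expr2 ler_peMl // (le_trans ler01 A1).
by rewrite addr_ge0 // !mulr_ge0 ?sqr_ge0 ?subr_ge0 //; lra.
Qed.

Lemma adjacent_pair_ineq (R : realFieldType) (A B M : R) :
  1 <= A -> 1 <= B -> 1 < A * B -> 0 <= M -> M <= A -> M <= B ->
  (A + B) * (A^-1 + B^-1) - 4 / (1 + M) <= (A + B) * ((A + B - 2) / (A * B - 1)).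
Proof.
wlog AB : A B / A <= B => [sym|] A1 B1 AB1 M0 MA MB.
  have [/sym|/ltW/sym] := leP A B; first exact.
  by rewrite [B * A]mulrC [B + A]addrC [B^-1 + _]addrC; apply.
have P0 : 0 < A * B * (A * B - 1) by rewrite mulr_gt0 ?subr_gt0 //; lra.
rewrite -subr_ge0.
have -> : (A + B) * ((A + B - 2) / (A * B - 1)) - ((A + B) * (A^-1 + B^-1) - 4 / (1 + M))
    = 4 / (1 + M) - (A + B) * (2 * A * B - A - B) / (A * B * (A * B - 1)).
  by field; rewrite !gt_eqF ?subr_gt0 //; lra.
rewrite subr_ge0; apply: (@le_trans _ _ (4 / (1 + A))).
  rewrite ler_pdivrMr // [4 / _ * _]mulrAC ler_pdivlMr; last lra.
  by rewrite !mulrA adjacent_pair_poly_ineq ?A1.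
by rewrite ler_pM2l // lef_pV2 ?lerD2l // posrE; lra.
Qed.

Section Degrees.
Variables (N : nat) (e : rel 'I_N).

Lemma mindeg_le i : (mindeg e <= deg e i)%N.
Proof. by rewrite /mindeg -minEnat; apply: (bigmin_le (T := nat)). Qed.

Lemma connected_deg_gt0 i : (1 < N)%N -> connected_graph e -> (0 < deg e i)%N.
Proof.
move=> N_gt1 e_conn; have : (0 < #|predC1 i|)%N by rewrite cardC1 card_ord; lia.
case/card_gt0P => j; rewrite inE => ji.
have /connectP [p e_path j_last] := e_conn i j.
case: p e_path j_last => [_ /= j_i|k ? /= /andP [eik _] _].
  by rewrite j_i eqxx in ji.
by apply/card_gt0P; exists k; rewrite inE.
Qed.

Variable R : pzSemiRingType.

Lemma deg_sum i : (deg e i)%:R = \sum_j (e i j)%:R :> R.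
Proof.
rewrite /deg -sum1_card natr_sum big_mkcond /=; apply: eq_bigr => j _.
by rewrite inE; case: (e i j).
Qed.

Lemma nedges_sum :
  (nedges e)%:R = \sum_(i : 'I_N) \sum_(j : 'I_N | (i < j)%N) (e i j)%:R :> R.
Proof.
rewrite /nedges -sum1_card natr_sum big_mkcond /=.
under [RHS]eq_bigr => i _ do rewrite big_mkcond.
rewrite pair_big /=; apply: eq_bigr => -[a c] _; rewrite inE /=.
by case: (a < c)%N; case: (e a c).
Qed.

Lemma handshake : symmetric e -> irreflexive e ->
  \sum_i (deg e i)%:R = (nedges e)%:R *+ 2 :> R.
Proof.
move=> e_sym e_irr; under eq_bigr => i _ do rewrite deg_sum.
rewrite sum_sym_split => [|i j]; last by rewrite e_sym.
by rewrite -nedges_sum big1 ?addr0 // => i _; rewrite e_irr.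
Qed.

End Degrees.

Section Laplacian.
Variables (R : comPzRingType) (N : nat) (e : rel 'I_N).
Hypotheses (e_sym : symmetric e) (e_irr : irreflexive e).

Local Notation L := (laplacian R e).
Local Notation d i := ((deg e i)%:R : R).

Lemma laplacian_entry a c : L a c = (a == c)%:R * d a - (e a c)%:R.
Proof.
rewrite mxE; case: eqP => [->|_]; first by rewrite e_irr mul1r subr0.
by rewrite mul0r sub0r; case: (e a c); rewrite ?oppr0.
Qed.

Lemma laplacian_sym : L^T = L.
Proof.
apply/matrixP => a c; rewrite !mxE.
by have [->|_] := eqVneq a c; rewrite ?eqxx // e_sym.
Qed.

Lemma laplacian_form (u : 'rV[R]_N) :
  2 * (u *m L *m u^T) 0 0 = \sum_a \sum_c (e a c)%:R * (u 0 a - u 0 c) ^+ 2.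
Proof.
have uLu : (u *m L *m u^T) 0 0
    = \sum_a \sum_c (e a c)%:R * u 0 a ^+ 2
      - \sum_a \sum_c (e a c)%:R * (u 0 a * u 0 c).
  rewrite mxE; under eq_bigr => c _ do rewrite !mxE mulr_suml.
  rewrite exchange_big /= -sumrB; apply: eq_bigr => a _.
  rewrite -mulr_suml -deg_sum (bigD1 a) //= [in RHS](bigD1 a) //=.
  rewrite e_irr mul0r add0r laplacian_entry eqxx e_irr mul1r subr0 -sumrN.
  congr (_ + _); first by ring.
  apply: eq_bigr => c ca.
  by rewrite laplacian_entry eq_sym (negbTE ca) mul0r; ring.
have sym_sq : \sum_a \sum_c (e a c)%:R * u 0 c ^+ 2
            = \sum_a \sum_c (e a c)%:R * u 0 a ^+ 2 :> R.
  rewrite exchange_big /=; apply: eq_bigr => a _.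
  by apply: eq_bigr => c _; rewrite e_sym.
transitivity (\sum_a \sum_c ((e a c)%:R * u 0 a ^+ 2 + (e a c)%:R * u 0 c ^+ 2
    - 2 * ((e a c)%:R * (u 0 a * u 0 c)))); last first.
  by apply: eq_bigr => a _; apply: eq_bigr => c _; ring.
rewrite !pair_big /= sumrB big_split -mulr_sumr /=.
rewrite !pair_big /= in uLu sym_sq.
by rewrite uLu sym_sq; ring.
Qed.

Lemma laplacian_form_two_point i j p q : i != j ->
  let z : 'rV[R]_N := p *: delta_mx 0 i + q *: delta_mx 0 j in
  (z *m L *m z^T) 0 0 = p ^+ 2 * d i + q ^+ 2 * d j - 2 * p * q * (e i j)%:R.
Proof.
move=> ij z.
have delta_form a c :
    ((delta_mx 0 a : 'rV[R]_N) *m L *m (delta_mx 0 c : 'rV[R]_N)^T) 0 0 = L a c.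
  by rewrite -rowE trmx_delta -colE !mxE.
rewrite /z linearD !linearZ /= !mulmxDr !mulmxDl -!scalemxAr -!scalemxAl.
rewrite ![(_ + _ : 'M[R]_1) 0 0]mxE ![(_ *: _ : 'M[R]_1) 0 0]mxE !delta_form.
rewrite !laplacian_entry !eqxx (negbTE ij) eq_sym (negbTE ij).
by rewrite !e_irr (e_sym j i) /=; ring.
Qed.

End Laplacian.

Section Resistance.
Variables (R : realFieldType) (N : nat) (e : rel 'I_N).
Hypotheses (e_sym : symmetric e) (e_irr : irreflexive e).

Local Notation L := (laplacian R e).
Local Notation d i := ((deg e i)%:R : R).

Lemma laplacian_form_ge0 (u : 'rV[R]_N) : 0 <= (u *m L *m u^T) 0 0.
Proof.
rewrite -(pmulr_rge0 _ (ltr0Sn R 1)) laplacian_form //.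
by do 2![apply: sumr_ge0 => ? _]; rewrite mulr_ge0 ?sqr_ge0.
Qed.

Lemma laplacian_form_eq0 (u : 'rV[R]_N) : (u *m L *m u^T) 0 0 = 0 ->
  forall a c, e a c -> u 0 a = u 0 c.
Proof.
move=> u0 a c eac.
have term_ge0 a' c' : 0 <= (e a' c')%:R * (u 0 a' - u 0 c') ^+ 2 :> R.
  by rewrite mulr_ge0 ?sqr_ge0.
have /eqP := laplacian_form e_sym e_irr u; rewrite u0 mulr0 eq_sym.
rewrite psumr_eq0 => [/allP/(_ a (mem_index_enum _))|a' _]; last exact: sumr_ge0.
rewrite psumr_eq0 => [/allP/(_ c (mem_index_enum _))|]; last by [].
by rewrite eac mul1r sqrf_eq0 subr_eq0 => /eqP.
Qed.

Hypothesis e_conn : connected_graph e.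

Lemma laplacian_ker_const (v : 'cV[R]_N) :
  L *m v = 0 -> forall i j, v i 0 = v j 0.
Proof.
move=> Lv i j.
have edge_const : forall a c, e a c -> v^T 0 a = v^T 0 c.
  by apply: laplacian_form_eq0; rewrite -mulmxA trmxK Lv mulmx0 mxE.
have /connectP [p + ->] := e_conn i j.
by elim: p i => [|c p IH] a //= /andP [/edge_const eac /IH <-]; rewrite !mxE in eac.
Qed.

Lemma delta_diff_sub_laplacian i j :
  ((delta_mx 0 i - delta_mx 0 j : 'rV[R]_N) <= L)%MS.
Proof.
rewrite submxE; move: (cokermx L) (mulmx_coker L) => V LV.
apply/eqP/matrixP => r k; rewrite ord1 mulmxBl -!rowE !mxE.
have LVk : L *m col k V = 0 by rewrite colE mulmxA LV mul0mx.
by have := laplacian_ker_const LVk i j; rewrite !mxE => ->; rewrite subrr.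
Qed.

Lemma mul_delta_diff_tr (u : 'rV[R]_N) i j :
  (u *m (delta_mx 0 i - delta_mx 0 j : 'rV[R]_N)^T) 0 0 = u 0 i - u 0 j.
Proof. by rewrite linearB /= !trmx_delta mulmxBr -!colE !mxE. Qed.

Lemma eff_res_ge (i j : 'I_N) (z : 'rV[R]_N) :
  2 * (z 0 i - z 0 j) - (z *m L *m z^T) 0 0 <= eff_res R e i j.
Proof.
rewrite /eff_res; set b : 'rV[R]_N := delta_mx 0 i - delta_mx 0 j.
set x := b *m pinvmx L.
have xL : x *m L = b by apply: mulmxKpV; apply: delta_diff_sub_laplacian.
have Lx : L *m x^T = b^T by rewrite -laplacian_sym // -trmx_mul xL.
have b_tr (u : 'rV[R]_N) : (b *m u^T) 0 0 = (u *m b^T) 0 0.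
  by rewrite -[b *m u^T]trmxK trmx_mul trmxK mxE.
(* expand [0 <= (x - z) L (x - z)^T] *)
have := laplacian_form_ge0 (x - z).
rewrite linearB /= mulmxBl !mulmxBr !mulmxBl xL -(mulmxA z L x^T) Lx.
rewrite 2![(_ + _ : 'M[R]_1) 0 0]mxE 2![(- _ : 'M[R]_1) 0 0]mxE.
rewrite [(_ + _ : 'M[R]_1) 0 0]mxE [(- _ : 'M[R]_1) 0 0]mxE !b_tr !mul_delta_diff_tr.
lra.
Qed.

Lemma eff_res_ge_two_point i j p q : i != j ->
  2 * (p - q) - (p ^+ 2 * d i + q ^+ 2 * d j - 2 * p * q * (e i j)%:R)
  <= eff_res R e i j.
Proof.
move=> ij; have := eff_res_ge i j (p *: delta_mx 0 i + q *: delta_mx 0 j).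
rewrite laplacian_form_two_point // !mxE !eqxx (negbTE ij) eq_sym (negbTE ij) /=.
by rewrite !mulr1 !mulr0 addr0 add0r.
Qed.

Lemma eff_res_ge_nonadj i j : i != j -> ~~ e i j ->
  (0 < deg e i)%N -> (0 < deg e j)%N -> (d i)^-1 + (d j)^-1 <= eff_res R e i j.
Proof.
move=> ij /negbTE nij di dj.
have := eff_res_ge_two_point (d i)^-1 (- (d j)^-1) ij; rewrite nij mulr0 subr0.
by congr (_ <= _); field; rewrite !pnatr_eq0 -!lt0n di dj.
Qed.

Lemma eff_res_ge_adj i j : e i j -> 1 < d i * d j ->
  (d i + d j - 2) / (d i * d j - 1) <= eff_res R e i j.
Proof.
move=> eij AB1; have ij : i != j by apply: contraTneq eij => ->; rewrite e_irr.
set A := d i; set B := d j.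
have := eff_res_ge_two_point ((B - 1) / (A * B - 1)) ((1 - A) / (A * B - 1)) ij.
by rewrite eij /=; congr (_ <= _); field; rewrite subr_eq0 gt_eqF.
Qed.

Lemma pair_eff_res_ge i j (m : nat) : i != j ->
  (0 < deg e i)%N -> (0 < deg e j)%N -> (m <= deg e i)%N -> (m <= deg e j)%N ->
  (d i + d j) * ((d i)^-1 + (d j)^-1) - (e i j)%:R * (4 / (1 + m%:R))
  <= (d i + d j) * eff_res R e i j.
Proof.
move=> ij di dj mi mj.
have Ai : 1 <= d i by rewrite ler1n.
have Bj : 1 <= d j by rewrite ler1n.
have [Mi Mj] : m%:R <= d i /\ m%:R <= d j by rewrite !ler_nat.
have [eij|nij] := boolP (e i j); last first.
  by rewrite mul0r subr0 ler_wpM2l ?eff_res_ge_nonadj //; lra.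
rewrite mul1r; have [AB1|AB1] := ltrP 1 (d i * d j).
  apply: le_trans (adjacent_pair_ineq _ _ _ _ _ _)
                  (ler_wpM2l _ (eff_res_ge_adj _ _)) => //; lra.
(* both endpoints are leaves *)
have A_le : d i <= d i * d j by rewrite ler_peMr // (le_trans ler01).
have B_le : d j <= d i * d j by rewrite ler_peMl // (le_trans ler01).
have [Ai1 Bj1] : d i = 1 /\ d j = 1 by split; lra.
have R1 : 1 <= eff_res R e i j.
  by have := eff_res_ge_two_point 1 0 ij; rewrite Ai1; congr (_ <= _); ring.
have m_bound : 2 <= 4 / (1 + m%:R) :> R.
  by rewrite ler_pdivlMr ?ltr_pwDl //; lra.
rewrite Ai1 Bj1 invr1; lra.
Qed.

End Resistance.

Theorem theorem3 (R : realFieldType) (N : nat) (e : rel 'I_N) :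
  (2 < N)%N -> simple_graph e -> connected_graph e ->
  add_deg_kirchhoff R e >=
    (N * (N - 2))%:R
    + 2 * (nedges e)%:R * (\sum_(j : 'I_N) ((deg e j)%:R)^-1)
    - 4 * (nedges e)%:R / (1 + (mindeg e)%:R).
Proof.
move=> N_gt2 [e_sym e_irr] e_conn.
have deg_gt0 i : (0 < deg e i)%N by apply: connected_deg_gt0 => //; lia.
set K : R := 4 / (1 + (mindeg e)%:R).
have pair_sum : \sum_(i : 'I_N) \sum_(j : 'I_N | (i < j)%N)
    (((deg e i)%:R + (deg e j)%:R) * ((deg e i)%:R^-1 + (deg e j)%:R^-1)
     - (e i j)%:R * K) <= add_deg_kirchhoff R e.
  apply: ler_sum => i _; apply: ler_sum => j ij; rewrite natrD.
  apply: pair_eff_res_ge; rewrite ?mindeg_le //.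
  by rewrite -val_eqE /= neq_ltn ij.
move: pair_sum; under eq_bigr => i _ do rewrite sumrB.
rewrite sumrB sum_pairs_mul_inv => [|i]; last by rewrite pnatr_eq0 -lt0n.
have -> : \sum_(i : 'I_N) \sum_(j : 'I_N | (i < j)%N) (e i j)%:R * K
          = (nedges e)%:R * K.
  by rewrite nedges_sum mulr_suml; apply: eq_bigr => i _; rewrite mulr_suml.
rewrite handshake // natrM natrB 1?ltnW //.
rewrite /K mulr_natl; lra.
Qed.
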